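(* Let $W_1,\dots,W_m\in\mathbb{R}^{n\times n}$ be eventually doubly stochastic signed adjacency matrices, and let $Q\in\mathbb{R}^{(n-1)\times n}$ satisfy $QQ^\top=I_{n-1}$, $Q\mathbf{1}=0$. If there exists a symmetric positive definite $P\in\mathbb{R}^{n\times n}$ such that \[ QW_k^\top PW_kQ^\top-QPQ^\top\prec0\quad\text{for all }k=1,\dots,m, \] then $\{W_1,\dots,W_m\}$ is a consensus set for the switched system $\mathbf{x}(t+1)=W_{\sigma(t)}\mathbf{x}(t)$.
   Context: $W_k$ are real matrices (entries of any sign). $W$ is eventually positive if there is $t_0\in\mathbb{Z}_{\ge0}$ with $W^t$ entrywise positive for all integers $t\ge t_0$; eventually doubly stochastic means eventually positive with $W\mathbf{1}=W^\top\mathbf{1}=\mathbf{1}$. $X\prec0$ means symmetric negative definite. A switching signal is any map $\sigma:\mathbb{Z}_{\ge0}\to\{1,\dots,m\}$; a consensus set is one for which, for every switching signal and every $\mathbf{x}(0)$, $\mathbf{x}(t)\to\alpha\mathbf{1}$ for some $\alpha\in\mathbb{R}$. *)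

From HB Require Import structures.
From mathcomp Require Import all_boot all_order all_algebra.
From mathcomp Require Import all_classical all_reals topology normedtype sequences.
Set Implicit Arguments. Unset Strict Implicit. Unset Printing Implicit Defensive.
Import Order.TTheory GRing.Theory Num.Theory.
Import numFieldNormedType.Exports.
Local Open Scope classical_set_scope.
Local Open Scope ring_scope.

Definition mxpow (R : realType) (n : nat) (W : 'M[R]_n) (t : nat) : 'M[R]_n :=
  iter t (mulmx W) 1%:M.

Definition ones (R : realType) (n : nat) : 'cV[R]_n := const_mx 1.

Definition eventually_positive (R : realType) (n : nat) (W : 'M[R]_n) : Prop :=
  exists t0 : nat, forall t : nat, (t0 <= t)%N ->
    forall i j : 'I_n, 0 < mxpow W t i j.

Definition eventually_doubly_stochastic (R : realType) (n : nat) (W : 'M[R]_n) : Prop :=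
  eventually_positive W /\ W *m ones R n = ones R n /\ W^T *m ones R n = ones R n.

Definition neg_def (R : realType) (n : nat) (X : 'M[R]_n) : Prop :=
  X^T = X /\ forall x : 'cV[R]_n, x != 0 -> (x^T *m X *m x) 0 0 < 0.

Definition pos_def (R : realType) (n : nat) (X : 'M[R]_n) : Prop :=
  X^T = X /\ forall x : 'cV[R]_n, x != 0 -> 0 < (x^T *m X *m x) 0 0.

Fixpoint traj (R : realType) (n m : nat) (W : 'I_m -> 'M[R]_n)
  (sigma : nat -> 'I_m) (x0 : 'cV[R]_n) (t : nat) : 'cV[R]_n :=
  match t with
  | 0 => x0
  | t'.+1 => W (sigma t') *m traj W sigma x0 t'
  end.

(* consensus set: for every switching signal and initial state, x(t) -> alpha 1
   (convergence componentwise, equivalent to convergence in R^n) *)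
Definition consensus_set (R : realType) (n m : nat) (W : 'I_m -> 'M[R]_n) : Prop :=
  forall (sigma : nat -> 'I_m) (x0 : 'cV[R]_n),
    exists alpha : R, forall i : 'I_n,
      (fun t => traj W sigma x0 t i 0) @ \oo --> alpha.

From HB Require Import structures.
From mathcomp Require Import all_boot all_order all_algebra.
From mathcomp Require Import all_classical all_reals topology normedtype sequences derive.
From mathcomp Require Import lra.
Import Order.TTheory GRing.Theory Num.Theory.
Import numFieldNormedType.Exports.
Set Implicit Arguments. Unset Strict Implicit. Unset Printing Implicit Defensive.
Local Open Scope classical_set_scope.
Local Open Scope ring_scope.

(* The deviation y(t) = x(t) - m 1 from the average m of x(0) obeys
   y(t+1) = W_s(t) y(t) since W_k 1 = 1, and stays in the hyperplane 1^T y = 0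
   since 1^T W_k = 1^T.  On that hyperplane Q^T Q is the identity, so the LMI
   says exactly that V(y) = y^T P y strictly decreases along every W_k; by
   compactness of the unit sphere the decrease is at least c |y_i|^2 for a
   uniform c > 0.  Hence V(y(t)) converges and its increments force y(t) -> 0. *)

Definition qform {R : pzRingType} {n : nat} (A : 'M[R]_n) (y : 'cV[R]_n) : R :=
  (y^T *m A *m y) 0 0.

Lemma qformZ (R : comPzRingType) n (A : 'M[R]_n) (a : R) (y : 'cV[R]_n) :
  qform A (a *: y) = a ^+ 2 * qform A y.
Proof. by rewrite /qform !linearZ /= -!scalemxAl scalerA mxE expr2. Qed.

Lemma qform0 (R : pzRingType) n (A : 'M[R]_n) : qform A 0 = 0.
Proof. by rewrite /qform trmx0 mul0mx mulmx0 mxE. Qed.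

Lemma qform_row_continuous (R : realType) n (A : 'M[R]_n) :
  continuous (fun r : 'rV[R]_n => qform A r^T).
Proof.
have -> : (fun r : 'rV[R]_n => qform A r^T) =
    (fun r => \sum_j (\sum_k r 0 k * A k j) * r 0 j).
  apply: funext => r; rewrite /qform trmxK mxE; apply: eq_bigr => j _.
  by rewrite !mxE; congr (_ * _); apply: eq_bigr => k _; rewrite mxE.
apply: continuous_big => [|j _ r]; first exact: add_continuous.
apply: continuousM; last exact: coord_continuous.
apply: continuous_big => [|k _ r']; first exact: add_continuous.
by apply: continuousM; [exact: coord_continuous | exact: cst_continuous].
Qed.

Lemma row_mul_col_continuous (R : realType) n (v : 'cV[R]_n) :
  continuous (fun r : 'rV[R]_n => (r *m v) 0 0).
Proof.
have -> : (fun r : 'rV[R]_n => (r *m v) 0 0) = (fun r => \sum_j r 0 j * v j 0).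
  by apply: funext => r; rewrite mxE.
apply: continuous_big => [|j _ r]; first exact: add_continuous.
by apply: continuousM; [exact: coord_continuous | exact: cst_continuous].
Qed.

Lemma mx_coord_le_norm (K : realDomainType) m n (M : 'M[K]_(m, n)) i j :
  `|M i j| <= `|M|.
Proof.
rewrite [leRHS]/Num.Def.normr /= mx_normrE; apply/bigmax_geP; right => /=.
by exists (i, j).
Qed.

Lemma mx11_eq0 (R : pzRingType) (M : 'M[R]_1) : M 0 0 = 0 -> M = 0.
Proof. by move=> M0; apply/matrixP => i j; rewrite !ord1 M0 mxE. Qed.

Lemma qform_min_on_unit_sphere (R : realType) n (A : 'M[R]_n) (v : 'cV[R]_n) :
  (forall y, v^T *m y = 0 -> y != 0 -> 0 < qform A y) ->
  exists2 c : R, 0 < c &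
    forall r : 'rV[R]_n, `|r| = 1 -> (r *m v) 0 0 = 0 -> c <= qform A r^T.
Proof.
move=> A_pos.
pose S := ((fun r : 'rV[R]_n => `|r|) @^-1` [set 1]) `&`
          ((fun r : 'rV[R]_n => (r *m v) 0 0) @^-1` [set 0]).
have [S_ne|S_empty] := pselect (S !=set0); last first.
  by exists 1 => // r r1 rv; exfalso; apply: S_empty; exists r.
have S_compact : compact S.
  apply: (subclosed_compact _ (rV_compact (fun=> @segment_compact R (-1) 1))).
    apply: closedI.
      by apply: (proj1 (continuous_closedP _) (@norm_continuous _ _)); exact: closed_eq.
    apply: (proj1 (continuous_closedP _) (@row_mul_col_continuous R n v)).
    exact: closed_eq.
  move=> r [/= r1 _] i /=.
  by rewrite in_itv /= -ler_norml -r1 mx_coord_le_norm.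
have [r0 /set_mem [r0_1 r0_v] r0_min] :=
  compact_EVT_min S_ne S_compact (continuous_subspaceT (@qform_row_continuous _ _ A)).
exists (qform A r0^T) => [|r r1 rv]; last exact/r0_min/mem_set.
apply: A_pos; first by rewrite -trmx_mul (mx11_eq0 r0_v) trmx0.
by rewrite trmx_eq0; apply: contra_eqN r0_1 => /eqP ->; rewrite normr0 eq_sym oner_eq0.
Qed.

Lemma qform_coercive (R : realType) n (A : 'M[R]_n) (v : 'cV[R]_n) :
  (forall y, v^T *m y = 0 -> y != 0 -> 0 < qform A y) ->
  exists2 c : R, 0 < c &
    forall y, v^T *m y = 0 -> forall i, c * y i 0 ^+ 2 <= qform A y.
Proof.
move=> /qform_min_on_unit_sphere [c c_gt0 c_le].
exists c => // y vy i; have [->|y_neq0] := eqVneq y 0.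
  by rewrite qform0 mxE expr2 !mulr0.
have yT_gt0 : 0 < `|y^T| by rewrite normr_gt0 trmx_eq0.
pose r := `|y^T|^-1 *: y^T.
have r1 : `|r| = 1 by rewrite normrZ normfV normr_id mulVf ?gt_eqF.
have rv : (r *m v) 0 0 = 0 by rewrite -scalemxAl -(trmxK v) -trmx_mul vy !mxE mulr0.
have -> : qform A y = `|y^T| ^+ 2 * qform A r^T.
  by rewrite linearZ /= trmxK qformZ mulrA -exprMn mulfV ?gt_eqF // expr1n mul1r.
have yi_le : y i 0 ^+ 2 <= `|y^T| ^+ 2.
  rewrite -real_normK ?num_real // lerXn2r ?nnegrE //.
  by have := mx_coord_le_norm y^T 0 i; rewrite mxE.
have := c_le r r1 rv; have := sqr_ge0 (y i 0).
nra.
Qed.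

Lemma qformB (R : pzRingType) n (A B : 'M[R]_n) y :
  qform (A - B) y = qform A y - qform B y.
Proof.
rewrite /qform mulmxBr mulmxBl.
by move: (_ *m A *m _) (_ *m B *m _) => a b; rewrite !mxE.
Qed.

Lemma qform_conj (R : comPzRingType) p n (A : 'M[R]_n) (B : 'M[R]_(n, p)) z :
  qform (B^T *m A *m B) z = qform A (B *m z).
Proof. by rewrite /qform trmx_mul !mulmxA. Qed.

Lemma tr_ones_mul_ones (R : realType) n : (ones R n)^T *m ones R n = n%:R%:M.
Proof.
apply/matrixP => i j; rewrite !ord1 !mxE.
under eq_bigr do rewrite !mxE mulr1.
by rewrite sumr_const card_ord.
Qed.

Lemma mxtrace_mul_tr_eq0 (R : realDomainType) m n (A : 'M[R]_(m, n)) :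
  \tr (A *m A^T) = 0 -> A = 0.
Proof.
have diagE i : (A *m A^T) i i = \sum_j A i j ^+ 2.
  by rewrite mxE; apply: eq_bigr => j _; rewrite mxE expr2.
rewrite /mxtrace; under eq_bigr do rewrite diagE.
move=> sum_sq0; apply/matrixP => i j; rewrite mxE.
have /psumr_eq0P row_sq0 :=
  psumr_eq0P (fun i _ => sumr_ge0 _ (fun j _ => sqr_ge0 (A i j))) sum_sq0 (i := i) isT.
by apply/eqP; rewrite -sqrf_eq0 row_sq0 // => k _; exact: sqr_ge0.
Qed.

Section Centering.
Variables (R : realType) (n : nat) (Q : 'M[R]_(n.-1, n)).
Hypotheses (n_gt0 : (0 < n)%N) (QQt : Q *m Q^T = 1%:M) (Q_ones : Q *m ones R n = 0).

Let J := ones R n *m (ones R n)^T.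

Lemma trQ_mul_Q : Q^T *m Q = 1%:M - n%:R^-1 *: J.
Proof.
pose E := Q^T *m Q + n%:R^-1 *: J.
have n_neq0 : (n%:R : R) != 0 by rewrite pnatr_eq0 -lt0n.
have QtQJ : Q^T *m Q *m J = 0 by rewrite mulmxA -(mulmxA Q^T) Q_ones mulmx0 mul0mx.
have JQtQ : J *m (Q^T *m Q) = 0.
  by rewrite mulmxA -(mulmxA _ _ Q^T) -trmx_mul Q_ones trmx0 mulmx0 mul0mx.
have QtQ_idem : Q^T *m Q *m (Q^T *m Q) = Q^T *m Q by rewrite mulmxA -(mulmxA Q^T) QQt mulmx1.
have JJ : J *m J = n%:R *: J.
  by rewrite mulmxA -(mulmxA (ones R n)) tr_ones_mul_ones mul_mx_scalar scalemxAl.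
have E_idem : E *m E = E.
  rewrite /E mulmxDl !mulmxDr -!scalemxAl -!scalemxAr QtQ_idem QtQJ JQtQ JJ.
  by rewrite !scaler0 add0r addr0 !scalerA -mulrA mulVf // mulr1.
(* [1 - E] is a symmetric idempotent of trace [n - (n - 1) - 1 = 0], hence zero. *)
pose F := 1%:M - E.
have F_idem : F *m F = F.
  by rewrite /F mulmxBl !mulmxBr E_idem !mul1mx mulmx1 subrr subr0.
have F_sym : F^T = F.
  by rewrite /F /E /J !linearD /= !linearN /= !linearZ /= !trmx_mul !trmxK trmx1.
have trF : \tr F = 0.
  rewrite /F /E /J !linearD /= !linearN /= linearZ /= mxtrace_mulC QQt.
  rewrite mxtrace_mulC tr_ones_mul_ones !mxtrace1 mxtrace_scalar mulr1n.
  by rewrite mulVf // -[n in n%:R](prednK n_gt0) mulrSr; lra.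
have /eqP : F = 0 by apply: mxtrace_mul_tr_eq0; rewrite F_sym F_idem.
by rewrite subr_eq0 => /eqP ->; rewrite addrK.
Qed.

Lemma trQ_mul_Q_mean0 (y : 'cV[R]_n) :
  (ones R n)^T *m y = 0 -> Q^T *m (Q *m y) = y.
Proof.
move=> y_mean0.
by rewrite mulmxA trQ_mul_Q mulmxBl mul1mx -scalemxAl -mulmxA y_mean0 mulmx0 scaler0 subr0.
Qed.

Lemma lmi_qform_pos (P V : 'M[R]_n) :
  neg_def (Q *m V^T *m P *m V *m Q^T - Q *m P *m Q^T) ->
  forall y, (ones R n)^T *m y = 0 -> y != 0 -> 0 < qform (P - V^T *m P *m V) y.
Proof.
move=> [_ lmi] y y_mean0 y_neq0.
have QtQy := trQ_mul_Q_mean0 y_mean0.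
have Qy_neq0 : Q *m y != 0 by apply: contraNneq y_neq0 => Qy0; rewrite -QtQy Qy0 mulmx0.
have lmiE : Q *m V^T *m P *m V *m Q^T - Q *m P *m Q^T =
    Q^T^T *m (V^T *m P *m V - P) *m Q^T by rewrite trmxK mulmxBr mulmxBl !mulmxA.
have := lmi _ Qy_neq0; rewrite -/(qform _ _) lmiE qform_conj QtQy.
by rewrite !qformB subr_lt0 subr_gt0.
Qed.

End Centering.

Lemma lyapunov_cvg0 (R : realType) (V u : nat -> R) (c : R) :
  0 < c -> (forall t, 0 <= V t) -> (forall t, V t.+1 + c * u t ^+ 2 <= V t) ->
  u @ \oo --> 0.
Proof.
move=> c_gt0 V_ge0 V_decr.
have V_noninc : nonincreasing_seq V.
  apply/nonincreasing_seqP => t; have := V_decr t.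
  have : 0 <= c * u t ^+ 2 by rewrite mulr_ge0 ?sqr_ge0 // ltW.
  lra.
have V_cvg : cvgn V.
  apply: nonincreasing_is_cvgn => //.
  by exists 0 => _ [t _ <-]; exact: V_ge0.
have dV_cvg0 : (fun t => V t - V t.+1) @ \oo --> 0.
  rewrite -(subrr (limn V)); apply: cvgB => //.
  by rewrite (cvg_shiftS V).
apply/cvgrPdist_lt => e e_gt0.
have ce_gt0 : 0 < c * e ^+ 2 by rewrite mulr_gt0 // exprn_gt0.
move/cvgrPdist_lt: dV_cvg0 => /(_ _ ce_gt0); apply: filterS => t.
rewrite !sub0r !normrN => dV_lt.
have : c * `|u t| ^+ 2 < c * e ^+ 2.
  rewrite real_normK ?num_real //.
  have := V_decr t; have := ler_norm (V t - V t.+1); lra.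
by rewrite ltr_pM2l // ltr_pXn2r // nnegrE ?normr_ge0 // ltW.
Qed.

Section Consensus.
Variables (R : realType) (n m : nat) (W : 'I_m -> 'M[R]_n) (P : 'M[R]_n).
Hypotheses (n_gt0 : (0 < n)%N) (P_pos : pos_def P).
Hypothesis W_ones : forall k, W k *m ones R n = ones R n.
Hypothesis trW_ones : forall k, (W k)^T *m ones R n = ones R n.
Hypothesis W_decr : forall k y, (ones R n)^T *m y = 0 -> y != 0 ->
  0 < qform (P - (W k)^T *m P *m W k) y.

Lemma uniform_decrease : exists2 c : R, 0 < c & forall k y,
  (ones R n)^T *m y = 0 -> forall i, c * y i 0 ^+ 2 <= qform (P - (W k)^T *m P *m W k) y.
Proof.
have /choice [c c_spec] : forall k, exists c : R, 0 < c /\ forall y,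
    (ones R n)^T *m y = 0 -> forall i, c * y i 0 ^+ 2 <= qform (P - (W k)^T *m P *m W k) y.
  by move=> k; have [c c_gt0 c_le] := qform_coercive (W_decr k); exists c.
exists (\big[Num.min/1]_k c k) => [|k y y_mean0 i].
  by elim/big_ind: _ => // [a b|k _]; [rewrite lt_min => -> | exact: (c_spec k).1].
apply: le_trans ((c_spec k).2 y y_mean0 i); apply: ler_wpM2r; first exact: sqr_ge0.
by rewrite (bigD1 k) //= ge_min lexx.
Qed.

Variables (sigma : nat -> 'I_m) (x0 : 'cV[R]_n).

Let mean : R := n%:R^-1 * ((ones R n)^T *m x0) 0 0.
Let dev t := traj W sigma x0 t - mean *: ones R n.

Lemma dev_step t : dev t.+1 = W (sigma t) *m dev t.
Proof. by rewrite /dev /= mulmxBr -scalemxAr W_ones. Qed.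

Lemma dev_mean0 t : (ones R n)^T *m dev t = 0.
Proof.
elim: t => [|t IH]; last first.
  by rewrite dev_step mulmxA -[_ *m W _]trmxK trmx_mul trmxK trW_ones.
rewrite /dev /= mulmxBr -scalemxAr tr_ones_mul_ones; apply: mx11_eq0.
by rewrite /mean !mxE eqxx mulr1n mulrAC mulVf ?mul1r ?subrr // pnatr_eq0 -lt0n.
Qed.

Lemma traj_cvg_mean i : (fun t => traj W sigma x0 t i 0) @ \oo --> mean.
Proof.
have [c c_gt0 c_le] := uniform_decrease.
have dev_cvg0 : (fun t => dev t i 0) @ \oo --> 0.
  apply: (@lyapunov_cvg0 _ (fun t => qform P (dev t)) _ c) => // [t|t].
    have [->|dev_neq0] := eqVneq (dev t) 0; first by rewrite qform0.
    exact/ltW/P_pos.2.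
  have := c_le (sigma t) (dev t) (dev_mean0 t) i.
  rewrite qformB qform_conj -dev_step; lra.
have -> : (fun t => traj W sigma x0 t i 0) = (fun t => dev t i 0 + mean).
  by apply: funext => t; rewrite /dev !mxE mulr1 subrK.
by rewrite -[X in _ --> X]add0r; apply: cvgD => //; exact: cvg_cst.
Qed.

End Consensus.

Theorem theorem10 (R : realType) (n m : nat) (W : 'I_m -> 'M[R]_n)
  (Q : 'M[R]_(n.-1, n)) :
  (forall k : 'I_m, eventually_doubly_stochastic (W k)) ->
  Q *m Q^T = 1%:M ->
  Q *m ones R n = 0 ->
  (exists P : 'M[R]_n, pos_def P /\
     forall k : 'I_m, neg_def (Q *m (W k)^T *m P *m W k *m Q^T - Q *m P *m Q^T)) ->
  consensus_set W.
Proof.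
move=> W_ds QQt Q_ones [P [P_pos lmi]] sigma x0.
have [n0|n_gt0] := posnP n; first by exists 0 => i; have := leq_trans (ltn_ord i) (eq_leq n0).
have W_decr k := lmi_qform_pos n_gt0 QQt Q_ones (lmi k).
have W_ones k := (W_ds k).2.1.
have trW_ones k := (W_ds k).2.2.
eexists; exact: traj_cvg_mean n_gt0 P_pos W_ones trW_ones W_decr sigma x0.
Qed.
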